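(* Let $0<\theta<2\pi$ and define, for $x\ge\psi(\theta)=\frac{\theta-\sin\theta}{1-\cos\theta}$, $$v(\theta,x)=\frac{U(\theta,x)^2}{(\theta-\sin\theta)^2},\quad U(\theta,x)=\theta\cos\tfrac\theta2-2\sin\tfrac\theta2+\sqrt{N(\theta,x)},$$ $$N(\theta,x)=\sin^2\tfrac\theta2\big[2(\theta-\sin\theta)x+2(1-\cos\theta)-\theta^2\big].$$ Then the function $x\mapsto v(\theta,x)$ is strictly increasing and convex on $[\psi(\theta),\infty)$.
   Context: Nonnegative square roots are used. (In the paper, the graph of $x\mapsto v(\theta,x)$ on $[\psi(\theta),\infty)$ is the level set $\{(x,v):v\ge0,\ \delta(x,v)=\theta\}$ of the parameter $\delta$ of the Heston distance.) *)

From Stdlib Require Import Reals.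
Open Scope R_scope.

Definition psi (th : R) : R := (th - sin th) / (1 - cos th).

Definition Nf (th x : R) : R :=
  (sin (th / 2)) ^ 2 * (2 * (th - sin th) * x + 2 * (1 - cos th) - th ^ 2).

Definition Uf (th x : R) : R :=
  th * cos (th / 2) - 2 * sin (th / 2) + sqrt (Nf th x).

Definition vf (th x : R) : R := (Uf th x) ^ 2 / (th - sin th) ^ 2.

Definition strictly_increasing_on (D : R -> Prop) (f : R -> R) : Prop :=
  forall a b, D a -> D b -> a < b -> f a < f b.

Definition convex_on (D : R -> Prop) (f : R -> R) : Prop :=
  forall a b t, D a -> D b -> 0 <= t <= 1 ->
    f (t * a + (1 - t) * b) <= t * f a + (1 - t) * f b.

(** With [s = sin(th/2)], [c = cos(th/2)] and [D = th - sin th], the radicand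
    [N(th, x)] is affine in [x] with slope [2 D s^2 > 0], and it equals [A^2] at
    [x = psi th], where [A = th c - 2 s = 2 ((th/2) c - s) < 0].  Hence on
    [[psi th, oo)] we have [sqrt N >= -A], so [U = A + sqrt N] is nonnegative and
    increasing, and [v] is increasing.  For convexity, expand
    [U^2 = A^2 + 2 A sqrt N + N]: the last term is affine and the middle one is
    convex because [sqrt N] is concave and [A <= 0]. *)

From Stdlib Require Import Reals Lra Psatz.
Open Scope R_scope.

Lemma sqrt_convex_comb_le (a b t : R) :
  0 <= a -> 0 <= b -> 0 <= t <= 1 ->
  t * sqrt a + (1 - t) * sqrt b <= sqrt (t * a + (1 - t) * b).
Proof.
  intros Ha Hb Ht.
  pose proof (sqrt_sqrt a Ha) as Ea; pose proof (sqrt_sqrt b Hb) as Eb.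
  pose proof (sqrt_pos a); pose proof (sqrt_pos b).
  assert (Hm : 0 <= t * a + (1 - t) * b) by nra.
  pose proof (sqrt_sqrt _ Hm) as Em; pose proof (sqrt_pos (t * a + (1 - t) * b)).
  (* the gap between the squares is t (1 - t) (sqrt a - sqrt b)^2 *)
  assert (0 <= t * (1 - t) * (sqrt a - sqrt b) ^ 2)
    by (apply Rmult_le_pos; [nra | apply pow2_ge_0]).
  nra.
Qed.

Lemma neg_le_sqrt (A a : R) : A ^ 2 <= a -> - A <= sqrt a.
Proof.
  intros HAa.
  assert (Ha : 0 <= a) by nra.
  pose proof (sqrt_sqrt a Ha); pose proof (sqrt_pos a).
  nra.
Qed.

Lemma sq_add_sqrt_lt (A a b : R) :
  A ^ 2 <= a -> a < b -> (A + sqrt a) ^ 2 < (A + sqrt b) ^ 2.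
Proof.
  intros HAa Hab.
  pose proof (neg_le_sqrt A a HAa).
  assert (sqrt a < sqrt b) by (apply sqrt_lt_1_alt; nra).
  nra.
Qed.

Lemma sq_add_sqrt_convex (A a b t : R) :
  A <= 0 -> 0 <= a -> 0 <= b -> 0 <= t <= 1 ->
  (A + sqrt (t * a + (1 - t) * b)) ^ 2
    <= t * (A + sqrt a) ^ 2 + (1 - t) * (A + sqrt b) ^ 2.
Proof.
  intros HA Ha Hb Ht.
  pose proof (sqrt_convex_comb_le a b t Ha Hb Ht) as Hconc.
  pose proof (sqrt_sqrt a Ha); pose proof (sqrt_sqrt b Hb).
  assert (Hm : 0 <= t * a + (1 - t) * b) by nra.
  pose proof (sqrt_sqrt _ Hm).
  nra.
Qed.

Section ShiftedSqrtSquare.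

Variables (A K x0 : R) (N : R -> R).
Hypothesis K_pos : 0 < K.
Hypothesis N_affine :
  forall a b t, N (t * a + (1 - t) * b) = t * N a + (1 - t) * N b.
Hypothesis N_increasing : forall a b, a < b -> N a < N b.
Hypothesis N_ge : forall x, x0 <= x -> A ^ 2 <= N x.

Lemma shifted_sqrt_square_increasing :
  strictly_increasing_on (fun x => x0 <= x) (fun x => (A + sqrt (N x)) ^ 2 / K).
Proof.
  intros a b Ha _ Hab.
  apply Rmult_lt_compat_r; [now apply Rinv_0_lt_compat |].
  now apply sq_add_sqrt_lt; [apply N_ge | apply N_increasing].
Qed.

Lemma shifted_sqrt_square_convex :
  A <= 0 ->
  convex_on (fun x => x0 <= x) (fun x => (A + sqrt (N x)) ^ 2 / K).
Proof.
  intros HA a b t Ha Hb Ht.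
  pose proof (N_ge a Ha); pose proof (N_ge b Hb).
  rewrite N_affine.
  unfold Rdiv.
  replace (t * ((A + sqrt (N a)) ^ 2 * / K) + (1 - t) * ((A + sqrt (N b)) ^ 2 * / K))
    with ((t * (A + sqrt (N a)) ^ 2 + (1 - t) * (A + sqrt (N b)) ^ 2) * / K) by ring.
  apply Rmult_le_compat_r; [left; now apply Rinv_0_lt_compat |].
  apply sq_add_sqrt_convex; nra.
Qed.

End ShiftedSqrtSquare.

Lemma mul_cos_lt_sin (t : R) : 0 < t < PI -> t * cos t < sin t.
Proof.
  intros [t_pos t_lt_pi].
  (* the derivative of x cos x - sin x is - x sin x < 0 on (0, pi) *)
  destruct (MVT_cor2 (fun x => x * cos x - sin x) (fun x => - (x * sin x)) 0 t t_pos)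
    as [c [Hc Hct]].
  - intros c _.
    replace (- (c * sin c)) with ((1 * cos c + c * (- sin c)) - cos c) by ring.
    apply derivable_pt_lim_minus; [| apply derivable_pt_lim_sin].
    apply (derivable_pt_lim_mult id cos);
      [apply derivable_pt_lim_id | apply derivable_pt_lim_cos].
  - rewrite sin_0, Rmult_0_l, Rminus_0_r in Hc.
    assert (0 < sin c) by (apply sin_gt_0; lra).
    assert (0 < c * sin c * t) by (repeat apply Rmult_lt_0_compat; lra).
    lra.
Qed.

Lemma Nf_affine (th a b t : R) :
  Nf th (t * a + (1 - t) * b) = t * Nf th a + (1 - t) * Nf th b.
Proof. unfold Nf; ring. Qed.

Lemma Nf_increasing (th : R) :
  0 < sin (th / 2) -> 0 < th - sin th -> forall a b, a < b -> Nf th a < Nf th b.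
Proof.
  intros Hs HD a b Hab; unfold Nf.
  apply Rmult_lt_compat_l; [now apply pow_lt |].
  assert (0 < (th - sin th) * (b - a)) by (apply Rmult_lt_0_compat; lra).
  lra.
Qed.

Lemma Nf_psi (th : R) :
  sin (th / 2) <> 0 ->
  Nf th (psi th) = (th * cos (th / 2) - 2 * sin (th / 2)) ^ 2.
Proof.
  intros Hs.
  assert (Hsin : sin th = 2 * sin (th / 2) * cos (th / 2)).
  { rewrite <- sin_2a; f_equal; field. }
  assert (Hcos : cos th = 1 - 2 * sin (th / 2) * sin (th / 2)).
  { rewrite <- cos_2a_sin; f_equal; field. }
  pose proof (sin2_cos2 (th / 2)) as Hsc; unfold Rsqr in Hsc.
  unfold Nf, psi; rewrite Hsin, Hcos.
  replace (1 - (1 - 2 * sin (th / 2) * sin (th / 2))) with (2 * sin (th / 2) ^ 2)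
    by ring.
  field_simplify; [| exact Hs].
  replace (cos (th / 2) ^ 2) with (1 - sin (th / 2) ^ 2) by nra.
  field.
Qed.

Theorem lemma2p7 (th : R) (Hth : 0 < th < 2 * PI) :
  strictly_increasing_on (fun x => psi th <= x) (fun x => vf th x) /\
  convex_on (fun x => psi th <= x) (fun x => vf th x).
Proof.
  assert (Hs : 0 < sin (th / 2)) by (apply sin_gt_0; lra).
  assert (HA : th * cos (th / 2) - 2 * sin (th / 2) <= 0).
  { pose proof (mul_cos_lt_sin (th / 2) ltac:(lra)); lra. }
  assert (HD : 0 < th - sin th) by (pose proof (sin_lt_x th); lra).
  assert (HK : 0 < (th - sin th) ^ 2) by now apply pow_lt.
  pose proof (Nf_increasing th Hs HD) as Nf_incr.
  assert (Nf_ge : forall x, psi th <= x ->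
            (th * cos (th / 2) - 2 * sin (th / 2)) ^ 2 <= Nf th x).
  { intros x [Hx | <-]; rewrite <- Nf_psi by lra; [left; now apply Nf_incr | lra]. }
  split.
  - exact (shifted_sqrt_square_increasing _ _ _ _ HK Nf_incr Nf_ge).
  - exact (shifted_sqrt_square_convex _ _ _ _ HK (Nf_affine th) Nf_ge HA).
Qed.
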